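(* Let $G$ be a finite two-player zero-sum extensive form game with perfect recall, and let $\boldsymbol\sigma^0,\boldsymbol\sigma^1,\dots$ be the strategy profiles generated by CFR$^+$ with alternating updates, so that Player 1's regret-like values are updated using $\boldsymbol{v}^{(\sigma^t_1,\sigma^t_2)}$ and Player 2's using $\boldsymbol{v}^{(\sigma^{t+1}_1,\sigma^t_2)}$. Let $l:=\max_{y,z\in Z}(u_1(y)-u_1(z))$, let $k:=\max_I|A(I)|$, and let $|\mathcal{I}|$ be the total number of information sets of Players 1 and 2. Then for every $t\ge1$, the exploitability of the weighted average profile $$\Bigl(\tfrac{2}{t^2+t}\textstyle\sum_{i=1}^{t}i\,\sigma^i_1,\ \tfrac{2}{t^2+t}\sum_{i=0}^{t-1}(i+1)\,\sigma^i_2\Bigr)$$ is at most $2|\mathcal{I}|\,l\sqrt{k/t}$.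
   Context: Extensive form game: a finite tree of histories $h$ (sequences of actions from the root), terminal histories $Z$, actions $A(h)$ at nonterminal $h$, an acting player $P(h)\in\{1,2,c\}$ where $c$ is chance acting with fixed probabilities, utilities $u_1(z)=-u_2(z)$ at terminals, and for each player a partition of that player's histories into information sets $I$ (all $h\in I$ share the same legal actions $A(I)$); perfect recall as usual. A strategy $\sigma_p$ gives a distribution $\boldsymbol{\sigma}_p(I)$ over $A(I)$ at each player-$p$ information set; $u^{\boldsymbol\sigma}_p$ is player $p$'s expected utility. For a profile $\boldsymbol{\sigma}$ and terminal $z$, $\pi^{\boldsymbol\sigma}_{-p}(z)$ is the product of probabilities of chance's and the opponent's actions on the path to $z$; for $h\sqsubseteq z$, $\pi^{\boldsymbol\sigma}_p(z\mid h)$ is the product of probabilities under $\sigma_p$ of $p$'s actions from $h$ to $z$. Counterfactual values: $v^{\boldsymbol\sigma}_p(h):=\sum_{z\in Z,\,h\sqsubseteq z}\pi^{\boldsymbol\sigma}_{-p}(z)\pi^{\boldsymbol\sigma}_p(z\mid h)u_p(z)$ and, for an information set $I$ of player $p$, $v^{\boldsymbol\sigma}(I)_a:=\sum_{h\in I}v^{\boldsymbol\sigma}_p(ha)$. With $x^+=\max(x,0)$ componentwise and $\boldsymbol{\sigma}_{\mathrm{rm}}(\boldsymbol{x}):=\boldsymbol{x}^+/(\boldsymbol{1}\cdot\boldsymbol{x}^+)$ if some $x_a>0$, else the uniform distribution, CFR$^+$ with alternating updates keeps $\boldsymbol{q}^t(I)$ for each information set, with $\boldsymbol{q}^0(I)=\boldsymbol0$,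 plays $\boldsymbol\sigma^t(I)=\boldsymbol{\sigma}_{\mathrm{rm}}(\boldsymbol{q}^t(I))$, and sets $\boldsymbol{q}^{t+1}(I)=(\boldsymbol{q}^t(I)+\boldsymbol{v}^t(I)-(\boldsymbol\sigma^t(I)\cdot\boldsymbol{v}^t(I))\boldsymbol1)^+$, where $\boldsymbol{v}^t(I)=\boldsymbol{v}^{(\sigma^t_1,\sigma^t_2)}(I)$ for Player-1 information sets and $\boldsymbol{v}^t(I)=\boldsymbol{v}^{(\sigma^{t+1}_1,\sigma^t_2)}(I)$ for Player-2 information sets. A weighted average $\sum_i w_i\sigma^i_p$ (weights summing to 1) denotes the strategy of player $p$ whose reach probabilities of every history are the corresponding weighted average of the reach probabilities of the $\sigma^i_p$ (equivalently, the mixture with weights $w_i$). Exploitability: $\mathrm{expl}(\sigma_1,\sigma_2):=\max_{\sigma^*_1}u_1^{(\sigma^*_1,\sigma_2)}+\max_{\sigma^*_2}u_2^{(\sigma_1,\sigma^*_2)}$. *)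

From HB Require Import structures.
From mathcomp Require Import all_boot all_order all_algebra.
From Stdlib Require List.
From mathcomp Require Import boolp classical_sets reals.

Set Implicit Arguments.
Unset Strict Implicit.
Unset Printing Implicit Defensive.

Import Order.TTheory GRing.Theory Num.Theory.
Local Open Scope ring_scope.

(*  - [Leaf u]         : terminal history z with u_1(z) = u (u_2 = -u). *)
(*  - [Chance ps ch]   : chance node; child c is reached w.p. ps`_c.    *)
(*  - [Node b lbl ch]    : decision node of player 1 (b = true) or        *)
(*                       player 2 (b = false), belonging to the         *)
(*                       information set labelled lbl of that player;     *)
(*                       the actions are 0, ..., size ch - 1 and        *)
(*                       action c leads to child ch`_c.                 *)
(* An information set is thus identified by a pair (b, lbl).             *)
Inductive tree (R : Type) : Type :=
| Leaf of R
| Chance of seq R & seq (tree R)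
| Node of bool & nat & seq (tree R).
Arguments Leaf {R}.
Arguments Chance {R}.
Arguments Node {R}.

(* behavioural strategy of one player: information-set label -> action -> prob *)
Definition strat (R : Type) := nat -> nat -> R.

(* all histories of the tree, each with its path from the root:        *)
(* the list of (acting player, information set, action taken) at the  *)
(* decision nodes strictly above it (root first; chance moves omitted) *)
Fixpoint nodes (R : Type) (t : tree R) : seq (seq (bool * nat * nat) * tree R) :=
  ([::], t) ::
  match t with
  | Leaf _ => [::]
  | Chance _ ch =>
      (fix go (l : seq (tree R)) :=
         match l with [::] => [::] | t' :: l' => nodes t' ++ go l' end) ch
  | Node b lbl ch =>
      (fix go (l : seq (tree R)) (c : nat) :=
         match l with
         | [::] => [::]
         | t' :: l' => [seq ((b, lbl, c) :: x.1, x.2) | x <- nodes t'] ++ go l' c.+1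
         end) ch 0%N
  end.

Definition dec_info (R : Type) (t : tree R) : option (bool * nat * nat) :=
  match t with Node b lbl ch => Some (b, lbl, size ch) | _ => None end.

Definition decs (R : Type) (g : tree R) : seq (bool * nat * nat) :=
  pmap (fun x => dec_info x.2) (nodes g).

Definition infosets (R : Type) (g : tree R) : seq (bool * nat) :=
  undup [seq x.1 | x <- decs g].

Definition arity (R : Type) (g : tree R) (b : bool) (lbl : nat) : nat :=
  head 0%N [seq x.2 | x <- decs g & x.1 == (b, lbl)].

Definition max_actions (R : Type) (g : tree R) : nat :=
  \max_(x <- decs g) x.2.

Definition leaf_utils (R : Type) (g : tree R) : seq R :=
  pmap (fun x => match x.2 with Leaf u => Some u | _ => None end) (nodes g).

(* l = max_{y,z in Z} (u_1(y) - u_1(z))  (the pair y = z gives 0, so the  *)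
(* neutral element 0 of the iterated max does not change the value)       *)
Definition util_range (R : realType) (g : tree R) : R :=
  \big[Num.max/0]_(y <- leaf_utils g) \big[Num.max/0]_(z <- leaf_utils g) (y - z).

Definition wf_game (R : realType) (g : tree R) : Prop :=
  (forall x, Stdlib.Lists.List.In x (nodes g) -> forall ps ch, x.2 = Chance ps ch ->
      [/\ size ps = size ch, (0 < size ch)%N, all (fun p => 0 <= p) ps
        & \sum_(p <- ps) p = 1])
  /\ (forall x, Stdlib.Lists.List.In x (nodes g) -> forall b lbl ch, x.2 = Node b lbl ch ->
        (0 < size ch)%N)
  /\ (forall x y, Stdlib.Lists.List.In x (nodes g) -> Stdlib.Lists.List.In y (nodes g) ->
        forall b lbl ch ch', x.2 = Node b lbl ch -> y.2 = Node b lbl ch' ->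
        size ch = size ch')
  (* perfect recall: histories of one information set of player b have *)
  (* the same sequence of player-b information sets and actions        *)
  /\ (forall x y, Stdlib.Lists.List.In x (nodes g) -> Stdlib.Lists.List.In y (nodes g) ->
        forall b lbl ch ch', x.2 = Node b lbl ch -> y.2 = Node b lbl ch' ->
        [seq e <- x.1 | e.1.1 == b] = [seq e <- y.1 | e.1.1 == b]).

Definition valid_strat (R : realType) (g : tree R) (b : bool) (s : strat R) : Prop :=
  forall lbl, (b, lbl) \in infosets g ->
    (forall a, (a < arity g b lbl)%N -> 0 <= s lbl a) /\
    \sum_(a < arity g b lbl) s lbl a = 1.

Fixpoint eu (R : realType) (s1 s2 : strat R) (t : tree R) : R :=
  match t with
  | Leaf u => u
  | Chance ps ch =>
      (fix go (l : seq (tree R)) (c : nat) :=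
         match l with
         | [::] => 0
         | t' :: l' => nth 0 ps c * eu s1 s2 t' + go l' c.+1
         end) ch 0%N
  | Node b lbl ch =>
      (fix go (l : seq (tree R)) (c : nat) :=
         match l with
         | [::] => 0
         | t' :: l' => (if b then s1 else s2) lbl c * eu s1 s2 t' + go l' c.+1
         end) ch 0%N
  end.

(* cfv_aux p lbl a s1 s2 t r = sum over histories h of information set     *)
(* (p, lbl) inside t of v_p(ha), where r is the product of the chance and  *)
(* opponent probabilities on the path from the root to t.                *)
(* v_p(ha) = pi_{-p}(h) * (expected u_p of the subtree at ha).           *)
Fixpoint cfv_aux (R : realType) (p : bool) (lbl a : nat) (s1 s2 : strat R)
    (t : tree R) (r : R) : R :=
  match t with
  | Leaf _ => 0
  | Chance ps ch =>
      (fix go (l : seq (tree R)) (c : nat) :=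
         match l with
         | [::] => 0
         | t' :: l' => cfv_aux p lbl a s1 s2 t' (r * nth 0 ps c) + go l' c.+1
         end) ch 0%N
  | Node b J ch =>
      (if (b == p) && (J == lbl)
       then r * ((if p then 1 else -1) * eu s1 s2 (nth (Leaf 0) ch a))
       else 0) +
      (fix go (l : seq (tree R)) (c : nat) :=
         match l with
         | [::] => 0
         | t' :: l' =>
             cfv_aux p lbl a s1 s2 t'
               (if b == p then r else r * (if b then s1 else s2) J c)
             + go l' c.+1
         end) ch 0%N
  end.

Definition cfv (R : realType) (g : tree R) (p : bool) (s1 s2 : strat R)
    (lbl a : nat) : R :=
  cfv_aux p lbl a s1 s2 g 1.

Definition rm (R : realType) (n : nat) (q : nat -> R) (a : nat) : R :=
  if (a < n)%N then
    if [exists a' : 'I_n, 0 < q a'] then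
      Num.max (q a) 0 / \sum_(a' < n) Num.max (q a') 0
    else n%:R^-1
  else 0.

Definition sigma_of (R : realType) (g : tree R) (p : bool)
    (Q : nat -> nat -> R) : strat R :=
  fun lbl a => rm (arity g p lbl) (Q lbl) a.

Definition cfr_update (R : realType) (g : tree R) (p : bool)
    (Q : nat -> nat -> R) (s1 s2 : strat R) : nat -> nat -> R :=
  fun lbl a =>
    let n := arity g p lbl in
    let sg := sigma_of g p Q lbl in
    let v := cfv g p s1 s2 lbl in
    Num.max (Q lbl a + v a - \sum_(b < n) sg b * v b) 0.

Fixpoint cfr_plus (R : realType) (g : tree R) (t : nat)
    : (nat -> nat -> R) * (nat -> nat -> R) :=
  match t with
  | 0%N => (fun _ _ => 0, fun _ _ => 0)
  | t'.+1 =>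
      let Q1 := (cfr_plus g t').1 in
      let Q2 := (cfr_plus g t').2 in
      let Q1' := cfr_update g true Q1 (sigma_of g true Q1) (sigma_of g false Q2) in
      let Q2' := cfr_update g false Q2 (sigma_of g true Q1') (sigma_of g false Q2) in
      (Q1', Q2')
  end.

Definition sigma1 (R : realType) (g : tree R) (t : nat) : strat R :=
  sigma_of g true (cfr_plus g t).1.
Definition sigma2 (R : realType) (g : tree R) (t : nat) : strat R :=
  sigma_of g false (cfr_plus g t).2.

(* Exploitability of the profile (sum_i w_i sigma1_i, sum_j w'_j sigma2_j), *)
(* the averages being mixtures given as lists of (weight, strategy):       *)
(* max_{s1} u_1(s1, avg2) + max_{s2} u_2(avg1, s2), the maxima taken      *)
(* (as suprema) over all behavioural strategies.                          *)
Definition expl_mix (R : realType) (g : tree R) (m1 m2 : seq (R * strat R)) : R :=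
  sup [set x : R | exists s, valid_strat g true s /\
                     x = \sum_(w <- m2) w.1 * eu s w.2 g]
  + sup [set x : R | exists s, valid_strat g false s /\
                     x = \sum_(w <- m1) w.1 * - eu w.2 s g].

Definition avg1 (R : realType) (g : tree R) (t : nat) : seq (R * strat R) :=
  [seq ((2 * i%:R) / (t%:R ^+ 2 + t%:R), sigma1 g i) | i <- iota 1 t].
Definition avg2 (R : realType) (g : tree R) (t : nat) : seq (R * strat R) :=
  [seq ((2 * i.+1%:R) / (t%:R ^+ 2 + t%:R), sigma2 g i) | i <- iota 0 t].

(* Fix a player p, a strategy s of p and opponent strategies tau.  By perfect
   recall, u_p(s, tau) - u_p(sigma, tau) splits over p's information sets I as
   pi^s_p(I) * sum_a (s_I(a) - sigma_I(a)) v(I)_a, where v is the counterfactual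
   value under (sigma, tau).  CFR+ runs regret matching+ at each I on these
   values, whose instantaneous regrets r_i are bounded by l.  Since
   q_{i+1} >= q_i + r_i and q_i . r_i = 0, we get
   sum_{i<T} (i+1) r_i(a) <= T q_T(a) and |q_T|^2 <= T |A(I)| l^2, so the
   linearly weighted regret of each player is at most |I_p| T l sqrt(k T).
   With alternating updates sigma^{i+1}_1 is moreover no worse than sigma^i_1
   against sigma^i_2, so player 1's regret can be measured against
   C = sum_i (i+1) u_1(sigma^{i+1}_1, sigma^i_2), which is exactly the
   reference value of player 2's regret; the two bounds add up with C
   cancelling, and dividing by (t^2 + t)/2 gives the claim. *)

From HB Require Import structures.
From mathcomp Require Import all_boot all_order all_algebra.
From mathcomp Require Import boolp classical_sets reals.
From mathcomp Require Import ring lra.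
From Stdlib Require List.
Import Order.TTheory GRing.Theory Num.Theory.
Local Open Scope ring_scope.
Set Implicit Arguments.
Unset Strict Implicit.
Unset Printing Implicit Defensive.

Section Trees.
Variable R : realType.
Implicit Types (t : tree R) (ch : seq (tree R)).

Fixpoint tree_ind_In (P : tree R -> Prop)
  (PL : forall u, P (Leaf u))
  (PC : forall ps ch, (forall t, List.In t ch -> P t) -> P (Chance ps ch))
  (PN : forall b J ch, (forall t, List.In t ch -> P t) -> P (Node b J ch))
  t : P t :=
  let fix children (l : seq (tree R)) : forall t, List.In t l -> P t :=
    match l with
    | [::] => fun t tl => False_ind _ tl
    | t' :: l' => fun t tl =>
        match tl with
        | or_introl e => eq_ind t' P (tree_ind_In PL PC PN t') t e
        | or_intror tl' => children l' t tl'
        end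
    end in
  match t with
  | Leaf u => PL u
  | Chance ps ch => PC ps ch (children ch)
  | Node b J ch => PN b J ch (children ch)
  end.

Lemma In_nth ch i : (i < size ch)%N -> List.In (nth (Leaf 0) ch i) ch.
Proof. by elim: ch i => [|t ch IH] [|i] //= ?; [left | right; apply: IH]. Qed.

Definition sum_children (F : nat -> tree R -> R) :=
  fix go (l : seq (tree R)) (c : nat) : R :=
    match l with [::] => 0 | t :: l' => F c t + go l' c.+1 end.

Lemma sum_childrenE F ch c :
  sum_children F ch c = \sum_(i < size ch) F (c + i)%N (nth (Leaf 0) ch i).
Proof.
elim: ch c => [|t ch IH] c /=; first by rewrite big_ord0.
rewrite big_ord_recl addn0 IH; congr (_ + _).
by apply: eq_bigr => i _; rewrite addSnnS.
Qed.

Lemma eu_Chance s1 s2 ps ch :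
  eu s1 s2 (Chance ps ch) =
  \sum_(i < size ch) nth 0 ps i * eu s1 s2 (nth (Leaf 0) ch i).
Proof. exact: (sum_childrenE (fun c t => nth 0 ps c * eu s1 s2 t) ch 0). Qed.

Lemma eu_Node s1 s2 b J ch :
  eu s1 s2 (Node b J ch) =
  \sum_(i < size ch) (if b then s1 else s2) J i * eu s1 s2 (nth (Leaf 0) ch i).
Proof.
exact: (sum_childrenE (fun c t => (if b then s1 else s2) J c * eu s1 s2 t) ch 0).
Qed.

Lemma cfv_aux_Chance p J a s1 s2 ps ch r :
  cfv_aux p J a s1 s2 (Chance ps ch) r =
  \sum_(i < size ch) cfv_aux p J a s1 s2 (nth (Leaf 0) ch i) (r * nth 0 ps i).
Proof. exact: (sum_childrenE (fun c t => cfv_aux p J a s1 s2 t (r * nth 0 ps c)) ch 0). Qed.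

Lemma cfv_aux_Node p J a s1 s2 b J0 ch r :
  cfv_aux p J a s1 s2 (Node b J0 ch) r =
  (if (b == p) && (J0 == J)
   then r * ((if p then 1 else -1) * eu s1 s2 (nth (Leaf 0) ch a)) else 0) +
  \sum_(i < size ch) cfv_aux p J a s1 s2 (nth (Leaf 0) ch i)
                       (if b == p then r else r * (if b then s1 else s2) J0 i).
Proof.
congr (_ + _); exact: (sum_childrenE (fun c t => cfv_aux p J a s1 s2 t
  (if b == p then r else r * (if b then s1 else s2) J0 c)) ch 0).
Qed.

Definition nodes_below_action b J :=
  fix go (l : seq (tree R)) (c : nat) :=
    match l with
    | [::] => [::]
    | t :: l' => [seq ((b, J, c) :: x.1, x.2) | x <- nodes t] ++ go l' c.+1
    end.

Definition nodes_below_chance :=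
  fix go (l : seq (tree R)) :=
    match l with [::] => [::] | t :: l' => nodes t ++ go l' end.

Lemma in_nodes_Node b J ch x :
  List.In x (nodes (Node b J ch)) <->
  x = ([::], Node b J ch) \/
  exists2 i, (i < size ch)%N & exists2 y, List.In y (nodes (nth (Leaf 0) ch i)) &
     x = ((b, J, i) :: y.1, y.2).
Proof.
have below c : List.In x (nodes_below_action b J ch c) <->
    exists2 i, (i < size ch)%N & exists2 y, List.In y (nodes (nth (Leaf 0) ch i)) &
      x = ((b, J, (c + i)%N) :: y.1, y.2).
  elim: ch c => [|t ch IH] c /=; first by split=> // -[].
  rewrite List.in_app_iff IH; split.
  - case=> [/List.in_map_iff [y [<- ?]]|[i ? [y ? ->]]].
      by exists 0%N => //; exists y; rewrite ?addn0.
    by exists i.+1 => //; exists y; rewrite ?addSnnS.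
  - case=> -[|i] ? [y ? ->]; first by left; apply/List.in_map_iff; exists y; rewrite addn0.
    by right; exists i => //; exists y; rewrite ?addSnnS.
rewrite /= below; split; case; by [left | right].
Qed.

Lemma in_nodes_Chance ps ch x :
  List.In x (nodes (Chance ps ch)) <->
  x = ([::], Chance ps ch) \/
  exists2 i, (i < size ch)%N & List.In x (nodes (nth (Leaf 0) ch i)).
Proof.
have below : List.In x (nodes_below_chance ch) <->
    exists2 i, (i < size ch)%N & List.In x (nodes (nth (Leaf 0) ch i)).
  elim: ch => [|t ch IH] /=; first by split=> // -[].
  rewrite List.in_app_iff IH; split.
  - by case=> [?|[i ? ?]]; [exists 0%N | exists i.+1].
  - by case=> -[|i] ? ?; [left | right; exists i].
rewrite /= below; split; case; by [left | right].
Qed.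

Lemma in_nodes_root t : List.In ([::], t) (nodes t).
Proof. by case: t => *; left. Qed.

Lemma in_nodes_path_entry t x e :
  List.In x (nodes t) -> e \in x.1 ->
  exists2 y, List.In y (nodes t) & exists2 ch, y.2 = Node e.1.1 e.1.2 ch & (e.2 < size ch)%N.
Proof.
elim/tree_ind_In: t x => [u|ps ch IH|b J ch IH] x.
- by case=> [<-|].
- case/in_nodes_Chance=> [->//|[i lt_i x_i] e_x].
  have [y y_i y2] := IH _ (In_nth lt_i) _ x_i e_x.
  by exists y => //; apply/in_nodes_Chance; right; exists i.
- case/in_nodes_Node=> [->//|[i lt_i [z z_i ->]]]; rewrite in_cons => /predU1P [->|e_z].
    by exists ([::], Node b J ch); [exact: in_nodes_root | exists ch].
  have [y y_i y2] := IH _ (In_nth lt_i) _ z_i e_z.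
  by exists ((b, J, i) :: y.1, y.2) => //; apply/in_nodes_Node; right; exists i => //; exists y.
Qed.

End Trees.


Section Distributions.
Variable R : realType.

Definition distr n (w : nat -> R) :=
  (forall i, (i < n)%N -> 0 <= w i) /\ \sum_(i < n) w i = 1.

Lemma distr_le1 n w i : distr n w -> (i < n)%N -> w i <= 1.
Proof.
case=> w_ge0 <- lt_i; rewrite (bigD1 (Ordinal lt_i)) //= lerDl.
by apply: sumr_ge0 => j _; apply: w_ge0.
Qed.

Lemma distr_sum_le n w (f : 'I_n -> R) B :
  distr n w -> (forall i, f i <= B) -> \sum_(i < n) w i * f i <= B.
Proof.
case=> w_ge0 w_sum f_le; rewrite -[B]mul1r -w_sum mulr_suml.
by apply: ler_sum => i _; rewrite ler_wpM2l ?w_ge0.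
Qed.

Lemma distr_sum_ge n w (f : 'I_n -> R) B :
  distr n w -> (forall i, B <= f i) -> B <= \sum_(i < n) w i * f i.
Proof.
case=> w_ge0 w_sum le_f; rewrite -[B]mul1r -w_sum mulr_suml.
by apply: ler_sum => i _; rewrite ler_wpM2l ?w_ge0.
Qed.

Lemma distr_norm_sum_le n w (X : 'I_n -> R) B r : distr n w ->
  (forall i : 'I_n, `|X i| <= B * (r * w i)) -> `|\sum_i X i| <= B * r.
Proof.
case=> _ w_sum X_le; apply: le_trans (ler_norm_sum _ _ _) _.
by rewrite -[r]mulr1 -w_sum !mulr_sumr; apply: ler_sum => i _; apply: X_le.
Qed.

Lemma distr_sum_sub n w (v : nat -> R) (c : R) :
  distr n w -> \sum_(a < n) w a * (v a - c) = \sum_(a < n) w a * v a - c.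
Proof.
case=> _ w_sum; rewrite -[c in RHS]mul1r -w_sum mulr_suml -sumrB.
by under eq_bigr do rewrite mulrBr.
Qed.

Lemma rm_ge0 n (q : nat -> R) a : 0 <= rm n q a.
Proof.
rewrite /rm; case: ifP => // _; case: ifP => _; last by rewrite invr_ge0 ler0n.
by rewrite divr_ge0 ?sumr_ge0 // => *; rewrite le_max lexx orbT.
Qed.

Lemma sum_max0_gt0 n (q : nat -> R) :
  [exists a : 'I_n, 0 < q a] -> 0 < \sum_(a < n) Num.max (q a) 0.
Proof.
case/existsP=> a0 q_a0; rewrite (bigD1 a0) //= ltr_wpDr ?lt_max ?q_a0 //.
by apply: sumr_ge0 => a _; rewrite le_max lexx orbT.
Qed.

Lemma rm_distr n (q : nat -> R) : (0 < n)%N -> distr n (rm n q).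
Proof.
move=> n_gt0; split=> [a _|]; first exact: rm_ge0.
rewrite /rm (eq_bigr (fun a : 'I_n => if [exists a' : 'I_n, 0 < q a']
    then Num.max (q a) 0 / \sum_(a' < n) Num.max (q a') 0 else n%:R^-1)); last first.
  by move=> a _; rewrite ltn_ord.
case pos: [exists a' : 'I_n, 0 < q a'].
  by rewrite -mulr_suml divff // gt_eqF // sum_max0_gt0.
by rewrite sumr_const card_ord -[_ *+ n]mulr_natl divff // pnatr_eq0 -lt0n.
Qed.

Lemma rm_pos n (q : nat -> R) a :
  [exists a' : 'I_n, 0 < q a'] -> (a < n)%N -> 0 <= q a ->
  rm n q a = q a / \sum_(a' < n) Num.max (q a') 0.
Proof. by move=> pos lt_a q_ge0; rewrite /rm lt_a pos (max_idPl q_ge0). Qed.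

Lemma eq_rm n (q q' : nat -> R) : (forall a, (a < n)%N -> q a = q' a) -> rm n q =1 rm n q'.
Proof.
move=> eq_q a; rewrite /rm; case: ifP => // lt_a.
have -> : [exists b : 'I_n, 0 < q b] = [exists b : 'I_n, 0 < q' b].
  by apply: eq_existsb => b; rewrite eq_q.
by rewrite eq_q // (eq_bigr (fun b : 'I_n => Num.max (q' b) 0)) // => b _; rewrite eq_q.
Qed.

End Distributions.

Lemma In_mem_pmap (A : Type) (B : eqType) (f : A -> option B) l x d :
  List.In x l -> f x = Some d -> d \in pmap f l.
Proof.
elim: l => [|y l IH] //= [<-|x_l] fx; first by rewrite fx mem_head.
by case: (f y) => [b|] //=; rewrite ?in_cons IH ?orbT.
Qed.

Lemma mem_pmap_In (A : Type) (B : eqType) (f : A -> option B) l d :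
  d \in pmap f l -> exists2 x, List.In x l & f x = Some d.
Proof.
elim: l => [|y l IH] //=.
case fy: (f y) => [b|] /=; last by case/IH=> x ? ?; exists x => //; right.
rewrite in_cons => /predU1P [->|/IH [x ? ?]]; first by exists y => //; left.
by exists x => //; right.
Qed.

Lemma head_map_filter_In (A B : Type) (P : pred A) (f : A -> B) d l x :
  List.In x l -> P x ->
  exists2 y, List.In y l & P y /\ head d [seq f z | z <- l & P z] = f y.
Proof.
elim: l => [|z l IH] //= [<-|x_l] Px; first by rewrite Px; exists z; [left|split].
case: ifP => [Pz|_]; first by exists z; [left|split].
by have [y ? ?] := IH x_l Px; exists y => //; right.
Qed.

Lemma mem_head_map_filter (A : Type) (T : eqType) (P : pred A) (f : A -> seq T) l e :
  e \in head [::] [seq f z | z <- l & P z] -> exists2 y, List.In y l & e \in f y.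
Proof.
elim: l => [|z l IH] //=; case: ifP => _ /=; first by exists z => //; left.
by case/IH=> y ? ?; exists y => //; right.
Qed.

Section Game.
Variable R : realType.
Variable g : tree R.
Implicit Types (t : tree R) (s : strat R) (pre : seq (bool * nat * nat)).

Lemma mem_decs x b J ch :
  List.In x (nodes g) -> x.2 = Node b J ch -> (b, J, size ch) \in decs g.
Proof. by move=> x_g x2; apply: In_mem_pmap x_g _; rewrite x2. Qed.

Lemma decsP d : d \in decs g ->
  exists2 x, List.In x (nodes g) & exists2 ch, x.2 = Node d.1.1 d.1.2 ch & d.2 = size ch.
Proof.
case/mem_pmap_In=> x x_g dx; exists x => //.
by move: dx; case: x.2 => // b J ch [<-]; exists ch.
Qed.

Lemma mem_infosets x b J ch :
  List.In x (nodes g) -> x.2 = Node b J ch -> (b, J) \in infosets g.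
Proof.
by move=> x_g x2; rewrite mem_undup; apply/mapP; exists (b, J, size ch); first exact: mem_decs x2.
Qed.

Lemma infosetsP b J : (b, J) \in infosets g ->
  exists2 x, List.In x (nodes g) & exists ch, x.2 = Node b J ch.
Proof.
rewrite mem_undup => /mapP [d /decsP [x x_g [ch x2 _]] dE].
by exists x => //; exists ch; rewrite x2 -dE.
Qed.

Lemma arity_le_max_actions b J : (arity g b J <= max_actions g)%N.
Proof.
rewrite /arity; case dE: [seq y <- decs g | y.1 == (b, J)] => [|d l] //=.
have : d \in [seq y <- decs g | y.1 == (b, J)] by rewrite dE mem_head.
by rewrite mem_filter => /andP [_ d_g]; apply: leq_bigmax_seq.
Qed.

Lemma util_range_ge0 : 0 <= util_range g.
Proof. exact: bigmax_ge_id. Qed.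

Lemma leaf_sub_le_util_range x y u v :
  List.In x (nodes g) -> x.2 = Leaf u -> List.In y (nodes g) -> y.2 = Leaf v ->
  u - v <= util_range g.
Proof.
move=> x_g x2 y_g y2.
have leaf_utilsP z w : List.In z (nodes g) -> z.2 = Leaf w -> w \in leaf_utils g.
  by move=> z_g z2; apply: In_mem_pmap z_g _; rewrite z2.
apply: (bigmax_sup_seq _ _ _ _ _ (leaf_utilsP _ _ x_g x2)) => //.
exact: (le_bigmax_seq _ _ _ (fun z => u - z) (leaf_utilsP _ _ y_g y2)).
Qed.

Definition infosets_of p : seq nat := [seq x.2 | x <- infosets g & x.1 == p].

Lemma uniq_infosets_of p : uniq (infosets_of p).
Proof.
rewrite map_inj_in_uniq ?filter_uniq ?undup_uniq // => -[b J] [b' J'].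
by rewrite !mem_filter => /andP [/eqP /= -> _] /andP [/eqP /= -> _] /= ->.
Qed.

Lemma mem_infosets_of p J : (J \in infosets_of p) = ((p, J) \in infosets g).
Proof.
apply/mapP/idP=> [[[b J'] + ->]|pJ]; last by exists (p, J); rewrite ?mem_filter ?eqxx.
by rewrite mem_filter => /andP [/eqP /= -> ->].
Qed.

Lemma size_infosets_of :
  (size (infosets_of true) + size (infosets_of false))%N = size (infosets g).
Proof.
rewrite !size_map !size_filter -(count_predC (fun x : bool * nat => x.1 == true)).
by congr (_ + _)%N; apply: eq_count => -[[] J].
Qed.

Definition at_infoset p J t : bool :=
  if t is Node b J' _ then (b == p) && (J' == J) else false.

(* Player [p]'s own decisions on the way to [J]; by perfect recall every history
   of [J] records exactly these ([infoset_seqE]). *)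
Definition infoset_seq p J : seq (bool * nat * nat) :=
  [seq e <- head [::] [seq x.1 | x <- nodes g & at_infoset p J x.2] | e.1.1 == p].

(* [t] is the subtree of [g] at a history with decision path [pre]; as in [nodes],
   chance moves are not recorded in paths. *)
Definition subtree_at pre t :=
  forall x, List.In x (nodes t) -> List.In (pre ++ x.1, x.2) (nodes g).

Lemma subtree_at_root : subtree_at [::] g.
Proof. by case. Qed.

Lemma subtree_at_node pre t : subtree_at pre t -> List.In (pre, t) (nodes g).
Proof. by move/(_ _ (in_nodes_root t)); rewrite cats0. Qed.

Lemma subtree_at_Chance pre ps ch i : subtree_at pre (Chance ps ch) ->
  (i < size ch)%N -> subtree_at pre (nth (Leaf 0) ch i).
Proof. by move=> sub lt_i x x_i; apply/sub/in_nodes_Chance; right; exists i. Qed.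

Lemma subtree_at_Node pre b J ch i : subtree_at pre (Node b J ch) ->
  (i < size ch)%N -> subtree_at (rcons pre (b, J, i)) (nth (Leaf 0) ch i).
Proof.
move=> sub lt_i x x_i; rewrite cat_rcons.
by apply: (sub ((b, J, i) :: x.1, x.2)); apply/in_nodes_Node; right; exists i => //; exists x.
Qed.

Hypothesis wf : wf_game g.

Lemma arity_node x b J ch :
  List.In x (nodes g) -> x.2 = Node b J ch -> arity g b J = size ch.
Proof.
have [_ [_ [same_size _]]] := wf.
move=> x_g x2; rewrite /arity.
have : (b, J, size ch) \in [seq y <- decs g | y.1 == (b, J)].
  by rewrite mem_filter eqxx (mem_decs x_g x2).
case dE: [seq y <- decs g | y.1 == (b, J)] => [|d l] //= _.
have : d \in [seq y <- decs g | y.1 == (b, J)] by rewrite dE mem_head.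
rewrite mem_filter => /andP [/eqP d1 /decsP [y y_g [ch' y2 d2]]].
by rewrite d2; apply: (same_size _ _ y_g x_g b J ch' ch) x2; rewrite y2 d1.
Qed.

Lemma arity_gt0 b J : (b, J) \in infosets g -> (0 < arity g b J)%N.
Proof.
have [_ [ch_gt0 _]] := wf.
by case/infosetsP=> x x_g [ch x2]; rewrite (arity_node x_g x2); apply: ch_gt0 x_g _ _ _ x2.
Qed.

Lemma infoset_seqE p J x : List.In x (nodes g) -> at_infoset p J x.2 ->
  [seq e <- x.1 | e.1.1 == p] = infoset_seq p J.
Proof.
have [_ [_ [_ recall]]] := wf.
have nodeP t : at_infoset p J t -> exists ch, t = Node p J ch.
  by case: t => // b J' ch /andP [/eqP -> /eqP ->]; exists ch.
move=> x_g x_J; rewrite /infoset_seq.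
have [y y_g [y_J ->]] := head_map_filter_In
  (P := fun z => at_infoset p J z.2) (fun z => z.1) [::] x_g x_J.
have [[ch x2] [ch' y2]] := (nodeP _ x_J, nodeP _ y_J).
exact: (recall _ _ x_g y_g p J ch ch').
Qed.

Lemma chance_distr x ps ch : List.In x (nodes g) -> x.2 = Chance ps ch ->
  distr (size ch) (nth 0 ps).
Proof.
have [chance _] := wf.
move=> x_g x2; have [size_ps _ ps_ge0 sum_ps] := chance _ x_g ps ch x2.
split; first by move=> i; rewrite -size_ps; apply/all_nthP.
by rewrite -sum_ps (big_nth 0) big_mkord size_ps.
Qed.

Lemma strat_distr p s x J ch : valid_strat g p s ->
  List.In x (nodes g) -> x.2 = Node p J ch -> distr (size ch) (s J).
Proof.
by move=> valid x_g x2; rewrite -(arity_node x_g x2); apply/valid/(mem_infosets x_g x2).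
Qed.

End Game.

Section PerfectRecall.
Variables (R : realType) (g : tree R).
Hypothesis wf : wf_game g.
Implicit Types (t : tree R) (s : strat R) (pre : seq (bool * nat * nat)).

Definition reach p s pre : R := \prod_(e <- pre | e.1.1 == p) s e.1.2 e.2.

Lemma reach_rcons p s pre b J c :
  reach p s (rcons pre (b, J, c)) = reach p s pre * (if b == p then s J c else 1).
Proof.
by rewrite /reach -cats1 big_cat big_cons big_nil /=; case: (b == p); rewrite ?mulr1.
Qed.

Lemma reach_filter p s pre : reach p s [seq e <- pre | e.1.1 == p] = reach p s pre.
Proof. by rewrite /reach big_filter_cond; apply: eq_bigl => e; rewrite andbb. Qed.

Lemma reach_infoset_seq p s J : valid_strat g p s ->
  0 <= reach p s (infoset_seq g p J) <= 1.
Proof.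
move=> valid; rewrite /infoset_seq reach_filter /reach big_seq_cond.
have s_bounded e : (e \in head [::] [seq x.1 | x <- nodes g & at_infoset p J x.2])
    && (e.1.1 == p) -> 0 <= s e.1.2 e.2 <= 1.
  case/andP=> /mem_head_map_filter [x x_g e_x] /eqP ep.
  have [[pre t] /= y_g [ch y2 lt_e]] := in_nodes_path_entry x_g e_x.
  rewrite ep in y2; have s_distr := strat_distr wf valid y_g y2.
  by rewrite s_distr.1 // (distr_le1 s_distr lt_e).
by rewrite prodr_ge0 ?prodr_ile1 // => e /s_bounded /andP [].
Qed.

Lemma cfv_aux_eq0 p J a s1 s2 t r :
  (forall x, List.In x (nodes t) -> ~~ at_infoset p J x.2) -> cfv_aux p J a s1 s2 t r = 0.
Proof.
elim/tree_ind_In: t r => [u|ps ch IH|b J0 ch IH] r no_J //.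
- rewrite cfv_aux_Chance big1 // => i _; apply: IH (In_nth (ltn_ord i)) _ _ => x x_i.
  by apply: no_J; apply/in_nodes_Chance; right; exists i.
- have root_J : (b == p) && (J0 == J) = false by exact: negbTE (no_J _ (in_nodes_root _)).
  rewrite cfv_aux_Node root_J add0r big1 // => i _.
  apply: IH (In_nth (ltn_ord i)) _ _ => x x_i; apply: (no_J ((b, J0, val i) :: x.1, x.2)).
  by apply/in_nodes_Node; right; exists i => //; exists x.
Qed.

Lemma infoset_seq_below p J0 J pre ch i x : subtree_at g pre (Node p J0 ch) ->
  (i < size ch)%N -> List.In x (nodes (nth (Leaf 0) ch i)) -> at_infoset p J x.2 ->
  infoset_seq g p J = infoset_seq g p J0 ++ (p, J0, i) :: [seq e <- x.1 | e.1.1 == p].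
Proof.
move=> sub lt_i x_i x_J.
rewrite -(infoset_seqE wf (subtree_at_Node sub lt_i x_i) x_J) /=.
rewrite -(infoset_seqE wf (subtree_at_node sub)) /= ?eqxx //.
by rewrite filter_cat -cats1 filter_cat /= eqxx -catA.
Qed.

Lemma no_infoset_below p J pre ch i x : subtree_at g pre (Node p J ch) ->
  (i < size ch)%N -> List.In x (nodes (nth (Leaf 0) ch i)) -> ~~ at_infoset p J x.2.
Proof.
move=> sub lt_i x_i; apply/negP=> /(infoset_seq_below sub lt_i x_i) /(congr1 size).
by rewrite size_cat /= -[X in X = _]addn0 => /eqP; rewrite eqn_add2l.
Qed.

Lemma infoset_below_action p J0 J pre ch i x : subtree_at g pre (Node p J0 ch) ->
  (i < size ch)%N -> List.In x (nodes (nth (Leaf 0) ch i)) -> at_infoset p J x.2 ->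
  i = (nth (p, 0, 0) (infoset_seq g p J) (size (infoset_seq g p J0))).2%N.
Proof. by move=> sub lt_i x_i /(infoset_seq_below sub lt_i x_i) ->; rewrite nth_cat ltnn subnn. Qed.

End PerfectRecall.

Section BoundedValues.
Variables (R : realType) (g : tree R).
Hypothesis wf : wf_game g.
Variables s1 s2 : strat R.
Hypotheses (s1_valid : valid_strat g true s1) (s2_valid : valid_strat g false s2).
Implicit Types (t : tree R) (pre : seq (bool * nat * nat)).

Lemma node_distr x b J ch : List.In x (nodes g) -> x.2 = Node b J ch ->
  distr (size ch) ((if b then s1 else s2) J).
Proof. by case: b => x_g x2; apply: strat_distr x_g x2. Qed.

Lemma eu_le pre t B : subtree_at g pre t ->
  (forall x u, List.In x (nodes g) -> x.2 = Leaf u -> u <= B) -> eu s1 s2 t <= B.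
Proof.
move=> + leaf_le; elim/tree_ind_In: t pre => [u|ps ch IH|b J ch IH] pre sub.
- exact: leaf_le (subtree_at_node sub) erefl.
- rewrite eu_Chance; apply: (distr_sum_le (chance_distr wf (subtree_at_node sub) erefl)).
  by move=> i; apply: IH (In_nth (ltn_ord i)) _ (subtree_at_Chance sub (ltn_ord i)).
- rewrite eu_Node; apply: (distr_sum_le (node_distr (subtree_at_node sub) erefl)).
  by move=> i; apply: IH (In_nth (ltn_ord i)) _ (subtree_at_Node sub (ltn_ord i)).
Qed.

Lemma eu_ge pre t B : subtree_at g pre t ->
  (forall x u, List.In x (nodes g) -> x.2 = Leaf u -> B <= u) -> B <= eu s1 s2 t.
Proof.
move=> + le_leaf; elim/tree_ind_In: t pre => [u|ps ch IH|b J ch IH] pre sub.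
- exact: le_leaf (subtree_at_node sub) erefl.
- rewrite eu_Chance; apply: (distr_sum_ge (chance_distr wf (subtree_at_node sub) erefl)).
  by move=> i; apply: IH (In_nth (ltn_ord i)) _ (subtree_at_Chance sub (ltn_ord i)).
- rewrite eu_Node; apply: (distr_sum_ge (node_distr (subtree_at_node sub) erefl)).
  by move=> i; apply: IH (In_nth (ltn_ord i)) _ (subtree_at_Node sub (ltn_ord i)).
Qed.

Lemma eu_sub_le_util_range pre t pre' t' : subtree_at g pre t -> subtree_at g pre' t' ->
  eu s1 s2 t - eu s1 s2 t' <= util_range g.
Proof.
move=> sub sub'; rewrite lerBlDl; apply: eu_le sub _ => x u x_g x2.
rewrite -lerBlDr; apply: eu_ge sub' _ => y v y_g y2.
by rewrite lerBlDr -lerBlDl; apply: leaf_sub_le_util_range x2 y_g y2.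
Qed.

Lemma cfv_aux_sub_le p J a a' pre t r : subtree_at g pre t -> 0 <= r ->
  (a < arity g p J)%N -> (a' < arity g p J)%N ->
  `|cfv_aux p J a s1 s2 t r - cfv_aux p J a' s1 s2 t r| <= util_range g * r.
Proof.
move=> + + lt_a lt_a'; elim/tree_ind_In: t pre r => [u|ps ch IH|b J0 ch IH] pre r sub r_ge0.
- by rewrite subrr normr0 mulr_ge0 ?util_range_ge0.
- have w := chance_distr wf (subtree_at_node sub) erefl.
  rewrite !cfv_aux_Chance -sumrB; apply: (distr_norm_sum_le w) => i.
  apply: IH (In_nth (ltn_ord i)) _ _ (subtree_at_Chance sub (ltn_ord i)) _.
  by rewrite mulr_ge0 // w.1.
rewrite !cfv_aux_Node.
have [/andP [/eqP eq_b /eqP eq_J]|_] := boolP ((b == p) && (J0 == J)).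
  subst b J0; have no_J (i : 'I_(size ch)) x : List.In x (nodes (nth (Leaf 0) ch i)) ->
    ~~ at_infoset p J x.2 := no_infoset_below wf sub (ltn_ord i).
  rewrite !big1 ?addr0 => [|i _|i _]; try exact: cfv_aux_eq0 (no_J i).
  rewrite -mulrBr -mulrBr normrM ger0_norm // mulrC ler_wpM2r //.
  rewrite (arity_node wf (subtree_at_node sub) erefl) in lt_a lt_a'.
  have {}sub i : (i < size ch)%N -> subtree_at g _ (nth (Leaf 0) ch i) := subtree_at_Node sub.
  rewrite normrM (_ : `|_| = 1) ?mul1r; last by case: (p); rewrite ?normrN normr1.
  by rewrite ler_norml lerNl opprB !(eu_sub_le_util_range (sub _ _) (sub _ _)).
rewrite !add0r -sumrB.
have [eq_b|neq_b] := eqVneq b p; last first.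
  have w := node_distr (subtree_at_node sub) erefl.
  apply: (distr_norm_sum_le w) => i.
  by apply: IH (In_nth (ltn_ord i)) _ _ (subtree_at_Node sub (ltn_ord i)) _; rewrite mulr_ge0 ?w.1.
subst b; apply: le_trans (ler_norm_sum _ _ _) _.
(* Perfect recall: only the child along the action recorded for this node in
   [infoset_seq g p J] can lead to [J]. *)
pose c0 := (nth (p, 0, 0) (infoset_seq g p J) (size (infoset_seq g p J0))).2%N.
have off_path (i : 'I_(size ch)) : (i : nat) != c0 ->
    `|cfv_aux p J a s1 s2 (nth (Leaf 0) ch i) r - cfv_aux p J a' s1 s2 (nth (Leaf 0) ch i) r| = 0.
  move=> ne_i; rewrite !cfv_aux_eq0 ?subrr ?normr0 // => x x_i; apply/negP => x_J;
  by move: ne_i; rewrite (infoset_below_action wf sub (ltn_ord i) x_i x_J) eqxx.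
have [lt_c0|ge_c0] := ltnP c0 (size ch); last first.
  rewrite big1 ?mulr_ge0 ?util_range_ge0 // => i _; apply: off_path.
  by rewrite neq_ltn (leq_trans (ltn_ord i) ge_c0).
rewrite (bigD1 (Ordinal lt_c0)) //= big1 ?addr0 => [|i ne_i].
  exact: IH (In_nth lt_c0) _ _ (subtree_at_Node sub lt_c0) r_ge0.
by apply: off_path; apply: contra ne_i => /eqP eq_i; apply/eqP/val_inj.
Qed.

Lemma cfv_sub_le p J a a' : (a < arity g p J)%N -> (a' < arity g p J)%N ->
  `|cfv g p s1 s2 J a - cfv g p s1 s2 J a'| <= util_range g.
Proof.
move=> lt_a lt_a'; rewrite -[util_range g]mulr1.
exact: cfv_aux_sub_le (@subtree_at_root _ g) ler01 lt_a lt_a'.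
Qed.

End BoundedValues.

Section GapDecomposition.
Variables (R : realType) (g : tree R).
Hypothesis wf : wf_game g.
Implicit Types (t : tree R) (s sg tau : strat R) (pre : seq (bool * nat * nat)).

Definition sgn p : R := if p then 1 else -1.

Definition profile p s tau : strat R * strat R := if p then (s, tau) else (tau, s).

Lemma profile_pick p s tau b :
  (if b then (profile p s tau).1 else (profile p s tau).2) = if b == p then s else tau.
Proof. by case: p; case: b. Qed.

Definition payoff p s tau t := sgn p * eu (profile p s tau).1 (profile p s tau).2 t.

Lemma payoff_Chance p s tau ps ch :
  payoff p s tau (Chance ps ch) =
  \sum_(i < size ch) nth 0 ps i * payoff p s tau (nth (Leaf 0) ch i).
Proof. by rewrite /payoff eu_Chance mulr_sumr; apply: eq_bigr => i _; rewrite mulrCA. Qed.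

Lemma payoff_Node p s tau b J ch :
  payoff p s tau (Node b J ch) =
  \sum_(i < size ch) (if b == p then s else tau) J i * payoff p s tau (nth (Leaf 0) ch i).
Proof.
by rewrite /payoff eu_Node profile_pick mulr_sumr; apply: eq_bigr => i _; rewrite mulrCA.
Qed.

Lemma sum_infosets_at p s (d : nat -> nat -> R) J0 (X : nat -> R) :
  J0 \in infosets_of g p ->
  \sum_(J <- infosets_of g p) reach p s (infoset_seq g p J) *
     \sum_(a < arity g p J) d J a * (if J0 == J then X a else 0) =
  reach p s (infoset_seq g p J0) * \sum_(a < arity g p J0) d J0 a * X a.
Proof.
move=> J0_p; rewrite (bigD1_seq J0) ?uniq_infosets_of // eqxx (big1 _ (fun J => J != J0)).
  exact: addr0.
move=> J /negbTE; rewrite eq_sym => ->.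
by rewrite big1 ?mulr0 // => a _; rewrite mulr0.
Qed.

Lemma payoff_gap_cfv_aux p s sg tau pre t r : subtree_at g pre t ->
  r * reach p s pre * (payoff p s tau t - payoff p sg tau t) =
  \sum_(J <- infosets_of g p) reach p s (infoset_seq g p J) *
     \sum_(a < arity g p J) (s J a - sg J a) *
        cfv_aux p J a (profile p sg tau).1 (profile p sg tau).2 t r.
Proof.
elim/tree_ind_In: t pre r => [u|ps ch IH|b J0 ch IH] pre r sub.
- rewrite /payoff /= subrr !mulr0 big1 // => J _.
  by rewrite big1 ?mulr0 // => a _; rewrite mulr0.
- under eq_bigr do under eq_bigr do rewrite cfv_aux_Chance mulr_sumr.
  under eq_bigr do rewrite exchange_big mulr_sumr.
  rewrite exchange_big !payoff_Chance -sumrB !mulr_sumr; apply: eq_bigr => i _.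
  by rewrite -(IH _ (In_nth (ltn_ord i)) _ _ (subtree_at_Chance sub (ltn_ord i))) -mulrBr; ring.
under eq_bigr do under eq_bigr do rewrite cfv_aux_Node mulrDr.
under eq_bigr do rewrite big_split mulrDr.
rewrite big_split /=.
have children : \sum_(J <- infosets_of g p) reach p s (infoset_seq g p J) *
    \sum_(a < arity g p J) (s J a - sg J a) * \sum_(i < size ch)
      cfv_aux p J a (profile p sg tau).1 (profile p sg tau).2 (nth (Leaf 0) ch i)
        (if b == p then r else r * (if b then (profile p sg tau).1 else (profile p sg tau).2) J0 i)
    = \sum_(i < size ch) r * reach p s pre * ((if b == p then s else tau) J0 i *
        (payoff p s tau (nth (Leaf 0) ch i) - payoff p sg tau (nth (Leaf 0) ch i))).
  under eq_bigr do under eq_bigr do rewrite mulr_sumr.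
  under eq_bigr do rewrite exchange_big mulr_sumr.
  rewrite exchange_big; apply: eq_bigr => i _.
  rewrite -(IH _ (In_nth (ltn_ord i)) _ _ (subtree_at_Node sub (ltn_ord i))).
  by rewrite reach_rcons profile_pick; case: (b == p); ring.
rewrite children !payoff_Node -sumrB mulr_sumr.
have [eq_b|neq_b] := eqVneq b p; last first.
  rewrite (big1 (infosets_of g p)) ?add0r => [|J _].
    by apply: eq_bigr => i _; rewrite -mulrBr.
  by rewrite big1 ?mulr0 // => a _; rewrite mulr0.
subst b; have node := subtree_at_node sub.
rewrite /= (sum_infosets_at s (fun J a => s J a - sg J a)
  (fun a => r * payoff p sg tau (nth (Leaf 0) ch a))); last first.
  by rewrite mem_infosets_of (mem_infosets node erefl).
rewrite -(infoset_seqE wf node) /= ?eqxx // reach_filter (arity_node wf node erefl).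
by rewrite mulr_sumr -big_split; apply: eq_bigr => i _ /=; ring.
Qed.
End GapDecomposition.

Section RegretMatchingPlus.
Variables (R : realType) (n : nat) (l : R) (q v : nat -> nat -> R).
Hypothesis n_gt0 : (0 < n)%N.

Definition inst_regret i a := v i a - \sum_(b < n) rm n (q i) b * v i b.

Hypothesis q0 : forall a, q 0%N a = 0.
Hypothesis qS : forall i a, q i.+1 a = Num.max (q i a + inst_regret i a) 0.

Lemma q_ge0 i a : 0 <= q i a.
Proof. by case: i => [|i]; rewrite ?q0 // qS le_max lexx orbT. Qed.

Lemma q_add_regret_le i a : q i a + inst_regret i a <= q i.+1 a.
Proof. by rewrite qS le_max lexx. Qed.

Lemma sum_rm_regret i : \sum_(a < n) rm n (q i) a * inst_regret i a = 0.
Proof. by rewrite /inst_regret distr_sum_sub ?subrr //; apply: rm_distr. Qed.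

Lemma sum_q_regret i : \sum_(a < n) q i a * inst_regret i a = 0.
Proof.
(* [rm n (q i)] is proportional to [q i] unless [q i] vanishes. *)
have [pos|] := boolP [exists a : 'I_n, 0 < q i a].
  pose S := \sum_(a < n) Num.max (q i a) 0.
  transitivity (S * \sum_(a < n) rm n (q i) a * inst_regret i a); last first.
    by rewrite sum_rm_regret mulr0.
  rewrite mulr_sumr; apply: eq_bigr => a _.
  by rewrite rm_pos ?q_ge0 // mulrA mulrCA divff ?mulr1 // gt_eqF ?sum_max0_gt0.
rewrite negb_exists => /forallP nonpos; rewrite big1 // => a _.
by rewrite (@le_anti _ _ (q i a) 0) ?mul0r // q_ge0 andbT leNgt nonpos.
Qed.

Lemma q_mul_regret_le i a : q i a * inst_regret i a <= q i.+1 a * inst_regret i a.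
Proof.
have := q_add_regret_le i a; have := q_ge0 i a; rewrite qS.
case: (lerP (q i a + inst_regret i a) 0) => [_|le0] /=; nra.
Qed.

Hypothesis regret_bounded : forall i a, (a < n)%N -> `|inst_regret i a| <= l.

Lemma sum_sqr_q_le i : \sum_(a < n) q i a ^+ 2 <= i%:R * n%:R * l ^+ 2.
Proof.
elim: i => [|i IH]; first by rewrite big1 ?mul0r // => a _; rewrite q0 expr0n.
have sqr_q_le a : q i.+1 a ^+ 2 <= (q i a + inst_regret i a) ^+ 2.
  by rewrite qS; case: (lerP (q i a + inst_regret i a) 0) => //; rewrite expr0n sqr_ge0.
have sum_sqr_regret : \sum_(a < n) inst_regret i a ^+ 2 <= n%:R * l ^+ 2.
  rewrite mulr_natl -[X in _ *+ X]card_ord -sumr_const; apply: ler_sum => a _.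
  by have := regret_bounded i (ltn_ord a); rewrite ler_norml => /andP [? ?]; nra.
apply: (@le_trans _ _ (\sum_(a < n) (q i a + inst_regret i a) ^+ 2)).
  by apply: ler_sum => a _; apply: sqr_q_le.
under eq_bigr do rewrite sqrrD.
rewrite !big_split /= sum_q_regret !addr0.
by rewrite -natr1 !mulrDl mul1r lerD.
Qed.

Lemma q_le i a : (a < n)%N -> q i a <= l * Num.sqrt (n%:R * i%:R).
Proof.
move=> lt_a; have l_ge0 : 0 <= l := le_trans (normr_ge0 _) (regret_bounded 0 lt_a).
rewrite -(ger0_norm (q_ge0 i a)) -sqrtr_sqr -[l]ger0_norm // -sqrtr_sqr -sqrtrM ?sqr_ge0 //.
rewrite ler_sqrt ?mulr_ge0 ?sqr_ge0 ?ler0n //.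
apply: (@le_trans _ _ (\sum_(b < n) q i b ^+ 2)).
  by rewrite (bigD1 (Ordinal lt_a)) //= lerDl sumr_ge0 // => b _; rewrite sqr_ge0.
by apply: le_trans (sum_sqr_q_le i) _; rewrite mulrC [i%:R * _]mulrC.
Qed.

Lemma weighted_regret_le T a : \sum_(i < T) i.+1%:R * inst_regret i a <= T%:R * q T a.
Proof.
elim: T => [|T IH]; first by rewrite big_ord0 mul0r.
rewrite big_ord_recr /= -natr1; apply: le_trans (lerD IH (lexx _)) _.
have := q_add_regret_le T a; have := q_ge0 T a; have : 0 <= T%:R :> R := ler0n _ _.
nra.
Qed.

Lemma q_eq0_of_succ_eq0 i : (forall a, (a < n)%N -> q i.+1 a = 0) ->
  forall a, (a < n)%N -> q i a = 0.
Proof.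
move=> qS0 a lt_a; apply/eqP; rewrite -sqrf_eq0 eq_le sqr_ge0 andbT.
have q_sqr_le b : (b < n)%N -> q i b ^+ 2 <= - (q i b * inst_regret i b).
  by move=> lt_b; have := q_add_regret_le i b; rewrite qS0 // => ?; have := q_ge0 i b; nra.
apply: le_trans (_ : \sum_(b < n) q i b ^+ 2 <= 0).
  by rewrite (bigD1 (Ordinal lt_a)) //= lerDl sumr_ge0 // => b _; rewrite sqr_ge0.
apply: (@le_trans _ _ (\sum_(b < n) - (q i b * inst_regret i b))).
  by apply: ler_sum => b _; apply: q_sqr_le.
by rewrite sumrN sum_q_regret oppr0.
Qed.

Lemma sum_rm_succ_regret_ge0 i : 0 <= \sum_(a < n) rm n (q i.+1) a * inst_regret i a.
Proof.
have [pos|] := boolP [exists a : 'I_n, 0 < q i.+1 a].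
  rewrite (eq_bigr (fun a : 'I_n => (\sum_(b < n) Num.max (q i.+1 b) 0)^-1 *
      (q i.+1 a * inst_regret i a))) => [|a _]; last by rewrite rm_pos ?q_ge0 // mulrCA mulrA mulrC.
  rewrite -mulr_sumr mulr_ge0 //; first by rewrite invr_ge0 ltW ?sum_max0_gt0.
  apply: (@le_trans _ _ (\sum_(a < n) q i a * inst_regret i a)); first by rewrite sum_q_regret.
  by apply: ler_sum => a _; apply: q_mul_regret_le.
rewrite negb_exists => /forallP nonpos.
have qS0 a : (a < n)%N -> q i.+1 a = 0.
  by move=> lt_a; apply: le_anti; rewrite q_ge0 andbT leNgt (nonpos (Ordinal lt_a)).
have qi0 := q_eq0_of_succ_eq0 qS0.
suff -> : \sum_(a < n) rm n (q i.+1) a * inst_regret i a =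
          \sum_(a < n) rm n (q i) a * inst_regret i a by rewrite sum_rm_regret.
by apply: eq_bigr => a _; rewrite (@eq_rm _ _ _ (q i)) // => b lt_b; rewrite qS0 ?qi0.
Qed.

End RegretMatchingPlus.

Lemma sigma_of_valid (R : realType) (g : tree R) p (Q : nat -> nat -> R) :
  wf_game g -> valid_strat g p (sigma_of g p Q).
Proof. by move=> wf J pJ; apply/rm_distr/arity_gt0. Qed.

Lemma profile_valid (R : realType) (g : tree R) p (s tau : strat R) :
  valid_strat g p s -> valid_strat g (~~ p) tau ->
  valid_strat g true (profile p s tau).1 /\ valid_strat g false (profile p s tau).2.
Proof. by case: p. Qed.

Definition regret_bound (R : realType) (g : tree R) (T : nat) : R :=
  T%:R * (util_range g * Num.sqrt ((max_actions g)%:R * T%:R)).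

Section CFRPlusPlayer.
Variables (R : realType) (g : tree R).
Hypothesis wf : wf_game g.
Variables (p : bool) (Q : nat -> nat -> nat -> R) (tau : nat -> strat R).
Hypothesis tau_valid : forall i, valid_strat g (~~ p) (tau i).

Local Notation sigma i := (sigma_of g p (Q i)).
Local Notation v i J :=
  (cfv g p (profile p (sigma i) (tau i)).1 (profile p (sigma i) (tau i)).2 J).
Local Notation regret J := (inst_regret (arity g p J) (fun i => Q i J) (fun i => v i J)).

Hypothesis Q0 : forall J a, Q 0%N J a = 0.
Hypothesis QS : forall i, Q i.+1 = cfr_update g p (Q i)
  (profile p (sigma i) (tau i)).1 (profile p (sigma i) (tau i)).2.

Lemma cfr_infoset_update J i a : Q i.+1 J a = Num.max (Q i J a + regret J i a) 0.
Proof. by rewrite QS /cfr_update /inst_regret addrA. Qed.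

Lemma cfr_regret_bounded J i a : J \in infosets_of g p -> (a < arity g p J)%N ->
  `|regret J i a| <= util_range g.
Proof.
rewrite mem_infosets_of => pJ lt_a.
have sigma_distr := sigma_of_valid (Q i) wf pJ.
have [valid1 valid2] := profile_valid (sigma_of_valid (Q i) wf) (tau_valid i).
rewrite /inst_regret -[v i J a]mul1r -sigma_distr.2 mulr_suml -sumrB.
rewrite -[util_range g]mulr1; apply: (distr_norm_sum_le sigma_distr) => b.
rewrite -mulrBr normrM mul1r ger0_norm ?sigma_distr.1 // [_ * sigma_of _ _ _ _ _]mulrC.
rewrite ler_wpM2l ?sigma_distr.1 //.
by have := cfv_sub_le wf valid1 valid2 lt_a (ltn_ord b).
Qed.

Lemma cfr_weighted_regret_le J a T : J \in infosets_of g p -> (a < arity g p J)%N ->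
  \sum_(i < T) i.+1%:R * regret J i a <= regret_bound g T.
Proof.
move=> pJ lt_a; have n_gt0 : (0 < arity g p J)%N by rewrite arity_gt0 // -mem_infosets_of.
have qS := cfr_infoset_update J.
have bounded i b : (b < arity g p J)%N -> _ := @cfr_regret_bounded J i b pJ.
apply: le_trans (weighted_regret_le (Q0 J) qS T a) _; rewrite ler_wpM2l ?ler0n //.
apply: le_trans (q_le n_gt0 (Q0 J) qS bounded T lt_a) _.
rewrite ler_wpM2l ?util_range_ge0 // ler_sqrt ?mulr_ge0 ?ler0n //.
by rewrite ler_wpM2r ?ler0n // ler_nat arity_le_max_actions.
Qed.

Lemma payoff_gap_regret s i : valid_strat g p s ->
  payoff p s (tau i) g - payoff p (sigma i) (tau i) g =
  \sum_(J <- infosets_of g p) reach p s (infoset_seq g p J) *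
    \sum_(a < arity g p J) s J a * regret J i a.
Proof.
move=> s_valid.
have := payoff_gap_cfv_aux wf p s (sigma i) (tau i) 1 (@subtree_at_root _ g).
rewrite [reach _ _ [::]]/reach big_nil !mul1r => ->.
rewrite !big_seq; apply: eq_bigr => J pJ; congr (_ * _).
have s_distr : distr (arity g p J) (s J) by apply: s_valid; rewrite -mem_infosets_of.
rewrite /inst_regret distr_sum_sub //; under eq_bigr do rewrite mulrBl.
by rewrite sumrB.
Qed.

Lemma cfr_weighted_payoff_gap_le s T : valid_strat g p s ->
  \sum_(i < T) i.+1%:R * (payoff p s (tau i) g - payoff p (sigma i) (tau i) g) <=
  (size (infosets_of g p))%:R * regret_bound g T.
Proof.
move=> s_valid; set B := regret_bound g T.
have B_ge0 : 0 <= B by rewrite !mulr_ge0 ?ler0n ?util_range_ge0 ?sqrtr_ge0.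
have -> : (size (infosets_of g p))%:R * B = \sum_(J <- infosets_of g p) B.
  by rewrite big_const_seq count_predT iter_addr_0 mulr_natl.
under eq_bigr do rewrite payoff_gap_regret // mulr_sumr.
rewrite exchange_big /= !big_seq; apply: ler_sum => J pJ.
have s_distr : distr (arity g p J) (s J) by apply: s_valid; rewrite -mem_infosets_of.
have /andP [rho_ge0 rho_le1] := reach_infoset_seq wf J s_valid.
apply: (@le_trans _ _ (reach p s (infoset_seq g p J) * B)); last by rewrite ler_piMl.
under eq_bigr do rewrite mulrCA mulr_sumr.
rewrite -mulr_sumr ler_wpM2l // exchange_big /=.
under eq_bigr do (under eq_bigr do rewrite mulrCA; rewrite -mulr_sumr).
apply: (distr_sum_le s_distr) => a.
exact: cfr_weighted_regret_le pJ (ltn_ord a).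
Qed.

Lemma cfr_payoff_improves i : payoff p (sigma i) (tau i) g <= payoff p (sigma i.+1) (tau i) g.
Proof.
rewrite -subr_ge0 payoff_gap_regret; last exact: sigma_of_valid.
rewrite big_seq sumr_ge0 // => J pJ.
have sigma_valid : valid_strat g p (sigma i.+1) := sigma_of_valid (Q i.+1) wf.
have /andP [rho_ge0 _] := reach_infoset_seq wf J sigma_valid.
have n_gt0 : (0 < arity g p J)%N by rewrite arity_gt0 // -mem_infosets_of.
by rewrite mulr_ge0 // (sum_rm_succ_regret_ge0 n_gt0 (Q0 J) (cfr_infoset_update J)).
Qed.

End CFRPlusPlayer.

Lemma sum_map_iota (V : nmodType) (T : Type) (f : nat -> T) (F : T -> V) m n :
  \sum_(w <- [seq f i | i <- iota m n]) F w = \sum_(i < n) F (f (m + i)%N).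
Proof.
rewrite big_map (big_nth 0%N) size_iota big_mkord.
by apply: eq_bigr => i _; rewrite nth_iota.
Qed.

Section Averaging.
Variables (R : realType) (g : tree R) (t : nat).
Hypothesis wf : wf_game g.

Definition alternating_value : R :=
  \sum_(i < t) i.+1%:R * eu (sigma1 g i.+1) (sigma2 g i) g.

Lemma sum_avg1 (F : strat R -> R) :
  \sum_(w <- avg1 g t) w.1 * F w.2 =
  2 / (t%:R ^+ 2 + t%:R) * \sum_(i < t) i.+1%:R * F (sigma1 g i.+1).
Proof.
by rewrite sum_map_iota mulr_sumr; apply: eq_bigr => i _ /=; rewrite add1n; ring.
Qed.

Lemma sum_avg2 (F : strat R -> R) :
  \sum_(w <- avg2 g t) w.1 * F w.2 =
  2 / (t%:R ^+ 2 + t%:R) * \sum_(i < t) i.+1%:R * F (sigma2 g i).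
Proof.
by rewrite sum_map_iota mulr_sumr; apply: eq_bigr => i _ /=; rewrite add0n; ring.
Qed.

Lemma best_response1_le s : valid_strat g true s ->
  \sum_(i < t) i.+1%:R * eu s (sigma2 g i) g <=
  (size (infosets_of g true))%:R * regret_bound g t + alternating_value.
Proof.
move=> s_valid.
have regret := cfr_weighted_payoff_gap_le wf (p := true) (Q := fun i => (cfr_plus g i).1)
  (tau := sigma2 g) (fun i => sigma_of_valid (cfr_plus g i).2 wf) (fun _ _ => erefl)
  (fun _ => erefl) t s_valid.
have improves i := cfr_payoff_improves wf (p := true) (Q := fun i => (cfr_plus g i).1)
  (tau := sigma2 g) (fun _ _ => erefl) (fun _ => erefl) i.
rewrite /payoff /= in regret improves.
set gap := \sum_(i < t) _ in regret.
set gain := \sum_(i < t)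
  i.+1%:R * (eu (sigma1 g i.+1) (sigma2 g i) g - eu (sigma1 g i) (sigma2 g i) g).
have gain_ge0 : 0 <= gain.
  by apply: sumr_ge0 => i _; rewrite mulr_ge0 // subr_ge0; have := improves i; rewrite !mul1r.
have -> : \sum_(i < t) i.+1%:R * eu s (sigma2 g i) g = gap - gain + alternating_value.
  by rewrite /gap /gain /alternating_value -!sumrB -big_split; apply: eq_bigr => i _ /=; ring.
lra.
Qed.

Lemma best_response2_le s : valid_strat g false s ->
  \sum_(i < t) i.+1%:R * - eu (sigma1 g i.+1) s g <=
  (size (infosets_of g false))%:R * regret_bound g t - alternating_value.
Proof.
move=> s_valid.
have regret := cfr_weighted_payoff_gap_le wf (p := false) (Q := fun i => (cfr_plus g i).2)
  (tau := fun i => sigma1 g i.+1) (fun i => sigma_of_valid (cfr_plus g i.+1).1 wf)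
  (fun _ _ => erefl) (fun _ => erefl) t s_valid.
rewrite /payoff /= in regret; set gap := \sum_(i < t) _ in regret.
have -> : \sum_(i < t) i.+1%:R * - eu (sigma1 g i.+1) s g = gap - alternating_value.
  by rewrite /gap /alternating_value -sumrB; apply: eq_bigr => i _ /=; ring.
lra.
Qed.

Lemma sup_valid_le p (f : strat R -> R) B :
  (forall s, valid_strat g p s -> f s <= B) ->
  sup [set x | exists s, valid_strat g p s /\ x = f s] <= B.
Proof.
move=> f_le; apply: ge_sup => [|_ [s [s_valid ->]]]; last exact: f_le.
have s0_valid : valid_strat g p (sigma_of g p (fun _ _ => 0)) := sigma_of_valid _ wf.
by exists (f (sigma_of g p (fun _ _ => 0))), (sigma_of g p (fun _ _ => 0)).
Qed.

Lemma expl_mix_avg_le :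
  expl_mix g (avg1 g t) (avg2 g t) <=
  2 / (t%:R ^+ 2 + t%:R) * ((size (infosets g))%:R * regret_bound g t).
Proof.
set w := 2 / (t%:R ^+ 2 + t%:R); set B := regret_bound g t.
have w_ge0 : 0 <= w by rewrite divr_ge0 ?addr_ge0 ?exprn_ge0.
apply: (@le_trans _ _ (w * ((size (infosets_of g true))%:R * B + alternating_value) +
                      w * ((size (infosets_of g false))%:R * B - alternating_value))).
  apply: lerD; apply: sup_valid_le => s s_valid.
    by rewrite (sum_avg2 (fun s2 => eu s s2 g)) ler_wpM2l // best_response1_le.
  by rewrite (sum_avg1 (fun s1 => - eu s1 s g)) ler_wpM2l // best_response2_le.
by rewrite -mulrDr addrACA subrr addr0 -mulrDl -natrD size_infosets_of.
Qed.

End Averaging.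

Lemma linear_average_bound (R : rcfType) (m k t : nat) (l : R) : (0 < t)%N -> 0 <= l ->
  2 / (t%:R ^+ 2 + t%:R) * (m%:R * (t%:R * (l * Num.sqrt (k%:R * t%:R)))) <=
  2 * m%:R * l * Num.sqrt (k%:R / t%:R).
Proof.
move=> t_gt0 l_ge0; have tR_gt0 : 0 < t%:R :> R by rewrite ltr0n.
have -> : Num.sqrt (k%:R * t%:R) = t%:R * Num.sqrt (k%:R / t%:R) :> R.
  have -> : k%:R * t%:R = k%:R / t%:R * t%:R ^+ 2 :> R.
    by rewrite expr2 mulrA divfK ?gt_eqF.
  by rewrite sqrtrM ?divr_ge0 ?ler0n // sqrtr_sqr gtr0_norm // mulrC.
set S := Num.sqrt _; have S_ge0 : 0 <= S := sqrtr_ge0 _.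
have -> : 2 / (t%:R ^+ 2 + t%:R) * (m%:R * (t%:R * (l * (t%:R * S)))) =
          2 * m%:R * l * S * (t%:R ^+ 2 / (t%:R ^+ 2 + t%:R)) by ring.
rewrite ler_piMr ?mulr_ge0 ?ler0n // ler_pdivrMr ?mul1r ?lerDl ?ler0n //.
by rewrite ltr_wpDr ?ltW // exprn_gt0.
Qed.

Theorem theorem4 (R : realType) (g : tree R) (t : nat) :
  wf_game g -> (1 <= t)%N ->
  expl_mix g (avg1 g t) (avg2 g t)
    <= 2 * (size (infosets g))%:R * util_range g
       * Num.sqrt ((max_actions g)%:R / t%:R).
Proof.
move=> wf t_gt0; apply: le_trans (expl_mix_avg_le t wf) _.
exact: linear_average_bound t_gt0 (util_range_ge0 g).
Qed.
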